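(* Let $c_0\ge0$, $c_1>0$, $a<0$, $v_\circ\ge0$ with $c_0^2+4ac_1<0$, let $v$ solve $v'=a-c_0v-c_1v^2$, $v(0)=v_\circ$, and $s(t)=\int_0^tv$. Let $\ell_1=\sqrt{c_1(A_0+|a|)}$ and let $\theta_1\in(0,\pi/2]$ be defined by $\cos\theta_1=\frac{2c_1v_\circ+c_0}{2\ell_1}$, $\sin\theta_1=\frac{|w|}{2\ell_1}$. Then for all $t\neq 0$ in the interval of existence, $$s(t)=(A_0+|a|)\,t^2\,Q(t\ell_1,\cos\theta_1)+v_\circ t,$$ where $Q(\tau,c)=\frac1{\tau^2}\log\Big(\frac{c}{\sigma}\sin(\tau\sigma)+\cos(\tau\sigma)\Big)-\frac c\tau$ with $\sigma=\sqrt{1-c^2}$. Moreover, for $c\in[0,1]$ and $0<|\tau|\le 0.001$, $$Q(\tau,c)=-\frac12+\frac{c\tau}3-\frac{2c^2+1}{12}\tau^2+\frac{c^2+2}{15}c\tau^3-\frac{2c^4+11c^2+2}{90}\tau^4+\frac{2c^4+26c^2+17}{315}c\tau^5-\varepsilon(\tau,c)$$ with $|\varepsilon(\tau,c)|\le10^{-18}$.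
   Context: $|w|=\sqrt{-(c_0^2+4ac_1)}$, $A_0=(c_1v_\circ+c_0)v_\circ$. For $c=1$ (i.e. $\sigma=0$) the expression $\frac{c}{\sigma}\sin(\tau\sigma)$ is understood as its limit $\tau$. *)

From Stdlib Require Import Reals Lra.
Open Scope R_scope.

Definition absw (a c0 c1 : R) : R := sqrt (- (c0 ^ 2 + 4 * a * c1)).

Definition A0 (c0 c1 v0 : R) : R := (c1 * v0 + c0) * v0.

Definition ell1 (a c0 c1 v0 : R) : R := sqrt (c1 * (A0 c0 c1 v0 + Rabs a)).

Definition cos_theta1 (a c0 c1 v0 : R) : R :=
  (2 * c1 * v0 + c0) / (2 * ell1 a c0 c1 v0).
Definition sin_theta1 (a c0 c1 v0 : R) : R :=
  absw a c0 c1 / (2 * ell1 a c0 c1 v0).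

Definition sigmaQ (c : R) : R := sqrt (1 - c ^ 2).

(* (c/sigma) sin(tau sigma), understood as its limit tau when sigma = 0 *)
Definition csin (tau c : R) : R :=
  if Req_dec_T (sigmaQ c) 0 then tau
  else c / sigmaQ c * sin (tau * sigmaQ c).

Definition Q (tau c : R) : R :=
  / tau ^ 2 * ln (csin tau c + cos (tau * sigmaQ c)) - c / tau.

Definition Qpoly (tau c : R) : R :=
  - / 2 + c * tau / 3 - (2 * c ^ 2 + 1) / 12 * tau ^ 2
  + (c ^ 2 + 2) / 15 * c * tau ^ 3
  - (2 * c ^ 4 + 11 * c ^ 2 + 2) / 90 * tau ^ 4
  + (2 * c ^ 4 + 26 * c ^ 2 + 17) / 315 * c * tau ^ 5.

From Stdlib Require Import Reals Lra Lia.
From Coquelicot Require Import Coquelicot.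
Open Scope R_scope.

(* Substituting y = c1 v + c0/2 turns the equation for v into y' = -(om^2 + y^2) with
   om = |w|/2, so y = om tan(theta0 - om t) and s(t) = (ln cos(theta0 - om t) - ln cos theta0
   - c0 t/2)/c1; expanding cos(theta0 - x)/cos theta0 = tan(theta0) sin x + cos x gives the
   stated formula.
   For the expansion, f(s) = (c/sigma) sin(s sigma) + cos(s sigma) solves f'' = (c^2 - 1) f,
   so u = f'/f solves the Riccati equation u' = c^2 - 1 - u^2.  The derivative of the Taylor
   polynomial of ln f solves it up to a defect O(s^6); a Gronwall bootstrap bounds its
   distance to u by O(s^7), and integrating once more |ln f - approx| <= |tau|^8, an error
   of at most |tau|^6 <= 10^-18 in Q. *)

Lemma continuity_pt_is_derive f x l : is_derive f x l -> continuity_pt f x.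
Proof.
  intro Hf. apply derivable_continuous_pt. exists l. now apply is_derive_Reals.
Qed.

Lemma sub_le_of_is_derive_le (g h g' h' : R -> R) (a b : R) : a <= b ->
  (forall x, a <= x <= b -> is_derive g x (g' x)) ->
  (forall x, a <= x <= b -> is_derive h x (h' x)) ->
  (forall x, a <= x <= b -> g' x <= h' x) ->
  g b - g a <= h b - h a.
Proof.
  intros Hab Hg Hh Hle.
  assert (Hd : forall x, a <= x <= b -> is_derive (fun y => h y - g y) x (h' x - g' x))
    by (intros x Hx; exact (is_derive_minus _ _ _ _ _ (Hh x Hx) (Hg x Hx))).
  destruct (MVT_gen (fun y => h y - g y) a b (fun x => h' x - g' x)) as [xi [Hxi Heq]].
  - rewrite Rmin_left, Rmax_right by lra. intros x Hx. apply Hd. lra.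
  - rewrite Rmin_left, Rmax_right by lra. intros x Hx.
    exact (continuity_pt_is_derive _ _ _ (Hd x Hx)).
  - rewrite Rmin_left, Rmax_right in Hxi by lra.
    specialize (Hle xi Hxi). nra.
Qed.

Lemma eq_of_is_derive_0 (g : R -> R) (alpha beta x : R) :
  alpha < 0 < beta -> alpha < x < beta ->
  (forall y, alpha < y < beta -> is_derive g y 0) -> g x = g 0.
Proof.
  intros H0 Hx Hg.
  assert (Hin : forall y, Rmin 0 x <= y <= Rmax 0 x -> alpha < y < beta)
    by (intros y; unfold Rmin, Rmax; destruct (Rle_dec 0 x); lra).
  destruct (MVT_gen g 0 x (fun _ => 0)) as [xi [_ Hxi]].
  - intros y Hy. apply Hg, Hin. lra.
  - intros y Hy. exact (continuity_pt_is_derive _ _ _ (Hg y (Hin y Hy))).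
  - lra.
Qed.

Lemma Rabs_sub_le_of_is_derive_bound (g g' : R -> R) (A B : R) (n : nat) (s : R) :
  0 <= s -> (forall x, 0 <= x <= s -> is_derive g x (g' x)) ->
  (forall x, 0 <= x <= s -> Rabs (g' x) <= A * x ^ n + B) ->
  Rabs (g s - g 0) <= A * s ^ S n / INR (S n) + B * s.
Proof.
  intros Hs Hg Hb.
  set (P := fun x => A * x ^ S n / INR (S n) + B * x).
  assert (HP : forall x, 0 <= x <= s -> is_derive P x (A * x ^ n + B)).
  { intros x _. unfold P. auto_derive; [easy|].
    change (match n with 0%nat => 1 | S _ => INR n + 1 end) with (INR (S n)).
    field. apply not_0_INR. lia. }
  assert (HP0 : P 0 = 0) by (unfold P; rewrite pow_i by lia; field; apply not_0_INR; lia).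
  assert (Hup := sub_le_of_is_derive_le g P g' _ 0 s Hs Hg HP
                   (fun x Hx => proj2 (proj1 (Rabs_le_between _ _) (Hb x Hx)))).
  assert (Hlow := sub_le_of_is_derive_le (fun x => - g x) P (fun x => - g' x) _ 0 s Hs
                    (fun x Hx => is_derive_opp _ _ _ (Hg x Hx)) HP
                    (fun x Hx => ltac:(pose proof (proj1 (Rabs_le_between _ _) (Hb x Hx)); lra))).
  fold (P s). apply Rabs_le. lra.
Qed.

Lemma Rabs_le_of_is_derive_bound (g g' : R -> R) (T A B : R) (n : nat) :
  (forall s, Rabs s <= T -> is_derive g s (g' s)) -> g 0 = 0 ->
  (forall s, Rabs s <= T -> Rabs (g' s) <= A * Rabs s ^ n + B) ->
  forall s, Rabs s <= T -> Rabs (g s) <= A * Rabs s ^ S n / INR (S n) + B * Rabs s.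
Proof.
  intros Hg Hg0 Hb s Hs.
  destruct (Rle_or_lt 0 s) as [Hpos|Hneg].
  - rewrite (Rabs_pos_eq s) in Hs |- * by lra.
    replace (g s) with (g s - g 0) by (rewrite Hg0; ring).
    apply (Rabs_sub_le_of_is_derive_bound g g'); [lra| |].
    + intros x Hx. apply Hg. rewrite Rabs_pos_eq; lra.
    + intros x Hx. rewrite <- (Rabs_pos_eq x) at 2 by lra. apply Hb. rewrite Rabs_pos_eq; lra.
  - rewrite (Rabs_left s) in Hs |- * by lra.
    replace (g s) with (g (- - s) - g (- 0)) by (rewrite Ropp_0, Hg0, Ropp_involutive; ring).
    apply (Rabs_sub_le_of_is_derive_bound (fun x => g (- x)) (fun x => - g' (- x))); [lra| |].
    + intros x Hx.
      replace (- g' (- x)) with (scal (-1) (g' (- x)))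
        by (unfold scal; simpl; unfold mult; simpl; ring).
      apply (is_derive_comp g Ropp).
      * apply Hg. rewrite Rabs_Ropp, Rabs_pos_eq; lra.
      * auto_derive; auto.
    + intros x Hx. rewrite Rabs_Ropp.
      replace x with (Rabs (- x)) at 2 by (rewrite Rabs_left1; lra).
      apply Hb. rewrite Rabs_Ropp, Rabs_pos_eq; lra.
Qed.

(* Bootstrapping: the sup E of |e| on [-T, T] satisfies E <= K T^(n+1) + L T E <= K T^(n+1) + E/2. *)
Lemma gronwall_pow_bound (e e' : R -> R) (T K L : R) (n : nat) :
  0 <= T -> 0 <= K -> 0 <= L -> L * T <= 1 / 2 ->
  (forall s, Rabs s <= T -> is_derive e s (e' s)) -> e 0 = 0 ->
  (forall s, Rabs s <= T -> Rabs (e' s) <= K * Rabs s ^ n + L * Rabs (e s)) ->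
  forall s, Rabs s <= T ->
  Rabs (e s) <= K * Rabs s ^ S n / INR (S n) + 2 * L * K * T ^ S n * Rabs s.
Proof.
  intros HT HK HL HLT He He0 Hb.
  assert (Hcont : forall s, -T <= s <= T -> continuity_pt (fun s => Rabs (e s)) s).
  { intros s Hs. apply (continuity_pt_comp e Rabs); [|apply Rcontinuity_abs].
    apply (continuity_pt_is_derive _ _ (e' s)), He, Rabs_le. exact Hs. }
  destruct (continuity_ab_maj _ (-T) T ltac:(lra) Hcont) as [Mx [HMx HMxT]].
  set (E := Rabs (e Mx)).
  assert (HsupE : forall s, Rabs s <= T -> Rabs (e s) <= E)
    by (intros s Hs; apply HMx, Rabs_le_between, Hs).
  assert (HTn : forall s, Rabs s <= T -> Rabs s ^ n <= T ^ n)
    by (intros s Hs; apply pow_incr; split; [apply Rabs_pos|exact Hs]).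
  assert (HE : E <= 2 * K * T ^ S n).
  { assert (H := Rabs_le_of_is_derive_bound e e' T 0 (K * T ^ n + L * E) 0 He He0).
    assert (HeMx : E <= 0 * Rabs Mx ^ 1 / INR 1 + (K * T ^ n + L * E) * Rabs Mx).
    { apply H; [|apply Rabs_le; exact HMxT]. intros s Hs. simpl pow.
      pose proof (HTn s Hs). pose proof (HsupE s Hs). specialize (Hb s Hs). nra. }
    assert (Rabs Mx <= T) by (apply Rabs_le; exact HMxT).
    assert (0 <= T ^ n) by (apply pow_le; exact HT).
    assert (0 <= E) by apply Rabs_pos.
    assert (HET : E <= (K * T ^ n + L * E) * T).
    { eapply Rle_trans; [|apply Rmult_le_compat_l; [nra|eassumption]]. simpl in HeMx. lra. }
    assert (0 <= (1 / 2 - L * T) * E) by nra.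
    simpl pow. nra. }
  apply (Rabs_le_of_is_derive_bound e e' T K (2 * L * K * T ^ S n) n He He0).
  intros s Hs. specialize (Hb s Hs). pose proof (HsupE s Hs). nra.
Qed.

Lemma RiemannInt_is_derive (S v : R -> R) (alpha beta t : R) (pr : Riemann_integrable v 0 t) :
  alpha < 0 < beta -> alpha < t < beta ->
  (forall x, alpha < x < beta -> is_derive S x (v x)) ->
  (forall x, alpha < x < beta -> continuity_pt v x) ->
  RiemannInt pr = S t - S 0.
Proof.
  intros H0 Ht HS Hv.
  assert (Hin : forall x, Rmin 0 t <= x <= Rmax 0 t -> alpha < x < beta)
    by (intros x; unfold Rmin, Rmax; destruct (Rle_dec 0 t); lra).
  rewrite <- RInt_Reals. apply is_RInt_unique.
  apply (is_RInt_derive S v).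
  - intros x Hx. exact (HS x (Hin x Hx)).
  - intros x Hx. apply continuity_pt_filterlim, Hv, Hin, Hx.
Qed.

Lemma cos_atan_pos k : 0 < cos (atan k).
Proof. pose proof (atan_bound k). apply cos_gt_0; lra. Qed.

Lemma cos_atan_sub k x : cos (atan k - x) = cos (atan k) * (k * sin x + cos x).
Proof.
  assert (Hsin : sin (atan k) = k * cos (atan k)).
  { pose proof (tan_atan k) as Htan. unfold tan in Htan. pose proof (cos_atan_pos k).
    rewrite <- Htan at 2. field. lra. }
  rewrite cos_minus, Hsin. ring.
Qed.

Lemma atan_riccati (y : R -> R) (om alpha beta : R) : 0 < om -> alpha < 0 < beta ->
  (forall x, alpha < x < beta -> is_derive y x (- (om ^ 2 + y x ^ 2))) ->
  forall x, alpha < x < beta -> atan (y x / om) = atan (y 0 / om) - om * x.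
Proof.
  intros Hom H0 Hy x Hx.
  enough (Hc : atan (y x / om) + om * x = atan (y 0 / om) + om * 0) by lra.
  apply (eq_of_is_derive_0 (fun x => atan (y x / om) + om * x) alpha beta); auto.
  intros z Hz. auto_derive.
  - exists (- (om ^ 2 + y z ^ 2)). apply Hy, Hz.
  - replace (Derive (fun x => y x) z) with (- (om ^ 2 + y z ^ 2))
      by (symmetry; apply is_derive_unique, Hy, Hz).
    assert (0 <= y z ^ 2) by apply pow2_ge_0.
    field. nra.
Qed.

Section Trajectory.

Variables c0 c1 a v0 : R.
Hypotheses (Hc0 : 0 <= c0) (Hc1 : 0 < c1) (Ha : a < 0) (Hv0 : 0 <= v0)
  (Hdisc : c0 ^ 2 + 4 * a * c1 < 0).

Let l := ell1 a c0 c1 v0.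

Lemma A0_nonneg : 0 <= A0 c0 c1 v0.
Proof. unfold A0. apply Rmult_le_pos; nra. Qed.

Lemma ell1_sq : l ^ 2 = c1 * (A0 c0 c1 v0 + Rabs a).
Proof. pose proof A0_nonneg. apply pow2_sqrt. pose proof (Rabs_pos a). nra. Qed.

Lemma ell1_pos : 0 < l.
Proof. pose proof A0_nonneg. apply sqrt_lt_R0. rewrite Rabs_left by lra. nra. Qed.

Lemma absw_sq : absw a c0 c1 ^ 2 = - (c0 ^ 2 + 4 * a * c1).
Proof. apply pow2_sqrt. lra. Qed.

Lemma absw_pos : 0 < absw a c0 c1.
Proof. apply sqrt_lt_R0. lra. Qed.

Lemma sigmaQ_cos_theta1 : sigmaQ (cos_theta1 a c0 c1 v0) = sin_theta1 a c0 c1 v0.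
Proof.
  pose proof ell1_pos. pose proof absw_pos.
  unfold sigmaQ, cos_theta1, sin_theta1. fold l.
  rewrite <- (sqrt_pow2 (absw a c0 c1 / (2 * l))) by (apply Rlt_le, Rdiv_lt_0_compat; lra).
  f_equal. unfold Rdiv. rewrite !Rpow_mult_distr, !pow_inv.
  replace ((2 * l) ^ 2) with (4 * l ^ 2) by ring.
  rewrite ell1_sq, absw_sq. unfold A0. rewrite Rabs_left by lra. field. nra.
Qed.

Let om := absw a c0 c1 / 2.
Let th0 := atan ((c1 * v0 + c0 / 2) / om).

Lemma om_pos : 0 < om.
Proof. pose proof absw_pos. unfold om. lra. Qed.

Definition velocity_primitive (x : R) : R := (ln (cos (th0 - om * x)) - c0 * x / 2) / c1.

Lemma velocity_primitive_sub (t : R) : t <> 0 -> 0 < cos (th0 - om * t) ->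
  velocity_primitive t - velocity_primitive 0
  = (A0 c0 c1 v0 + Rabs a) * t ^ 2 * Q (t * l) (cos_theta1 a c0 c1 v0) + v0 * t.
Proof.
  intros Ht0 Hcos. pose proof ell1_pos. pose proof om_pos.
  set (c := cos_theta1 a c0 c1 v0).
  assert (Hsig : sigmaQ c = om / l)
    by (unfold c; rewrite sigmaQ_cos_theta1; unfold sin_theta1, om; fold l; field; lra).
  unfold Q, csin. destruct (Req_dec_T (sigmaQ c) 0) as [Hs0|_].
  { rewrite Hsig in Hs0. apply Rgt_not_eq in Hs0; [contradiction|]. apply Rdiv_lt_0_compat; lra. }
  rewrite Hsig.
  replace (t * l * (om / l)) with (om * t) by (field; lra).
  replace (c / (om / l)) with ((c1 * v0 + c0 / 2) / om)
    by (unfold c, cos_theta1; fold l; field; split; lra).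
  replace ((c1 * v0 + c0 / 2) / om * sin (om * t) + cos (om * t)) with (cos (th0 - om * t) / cos th0)
    by (unfold th0; rewrite cos_atan_sub; pose proof (cos_atan_pos ((c1 * v0 + c0 / 2) / om));
        field; split; lra).
  rewrite ln_div; [|exact Hcos|apply cos_atan_pos].
  replace (A0 c0 c1 v0 + Rabs a) with (l ^ 2 / c1) by (rewrite ell1_sq; field; lra).
  unfold velocity_primitive, c, cos_theta1. fold l. replace (th0 - om * 0) with th0 by ring.
  field. lra.
Qed.

Section Solution.

Variables (alpha beta : R) (v : R -> R).
Hypotheses (H0 : alpha < 0 < beta)
  (Hv : forall x, alpha < x < beta -> derivable_pt_lim v x (a - c0 * v x - c1 * v x ^ 2))
  (Hv00 : v 0 = v0).

Lemma is_derive_solution x : alpha < x < beta -> is_derive v x (a - c0 * v x - c1 * v x ^ 2).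
Proof. intros Hx. apply is_derive_Reals, Hv, Hx. Qed.

(* y = c1 v + c0/2 solves y' = -(om^2 + y^2). *)
Lemma atan_solution x : alpha < x < beta -> atan ((c1 * v x + c0 / 2) / om) = th0 - om * x.
Proof.
  intros Hx. pose proof om_pos. unfold th0. rewrite <- Hv00.
  apply (atan_riccati (fun x => c1 * v x + c0 / 2) om alpha beta); [easy|easy| |easy].
  intros z Hz. auto_derive; [now exists (a - c0 * v z - c1 * v z ^ 2); apply is_derive_solution|].
  replace (Derive (fun x => v x) z) with (a - c0 * v z - c1 * v z ^ 2)
    by (symmetry; apply is_derive_unique, is_derive_solution, Hz).
  replace (om ^ 2) with (absw a c0 c1 ^ 2 / 4) by (unfold om; field).
  rewrite absw_sq. field.
Qed.

Lemma cos_phase_pos x : alpha < x < beta -> 0 < cos (th0 - om * x).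
Proof. intros Hx. rewrite <- atan_solution by exact Hx. apply cos_atan_pos. Qed.

Lemma is_derive_velocity_primitive x : alpha < x < beta -> is_derive velocity_primitive x (v x).
Proof.
  intros Hx. pose proof om_pos. pose proof (cos_phase_pos x Hx).
  assert (Htan : c1 * v x + c0 / 2 = om * tan (th0 - om * x))
    by (rewrite <- atan_solution, tan_atan by exact Hx; field; lra).
  unfold velocity_primitive, tan in *. auto_derive; [easy|].
  replace (th0 + - (om * x)) with (th0 - om * x) by ring.
  apply (Rmult_eq_reg_l c1); [|lra].
  replace (c1 * v x) with (c1 * v x + c0 / 2 - c0 / 2) by ring. rewrite Htan.
  field. lra.
Qed.

Lemma RiemannInt_trajectory t : alpha < t < beta -> t <> 0 ->
  forall pr : Riemann_integrable v 0 t,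
  RiemannInt pr = (A0 c0 c1 v0 + Rabs a) * t ^ 2 * Q (t * l) (cos_theta1 a c0 c1 v0) + v0 * t.
Proof.
  intros Ht Ht0 pr.
  rewrite (RiemannInt_is_derive velocity_primitive v alpha beta t pr H0 Ht
             is_derive_velocity_primitive
             (fun x Hx => continuity_pt_is_derive _ _ _ (is_derive_solution x Hx))).
  exact (velocity_primitive_sub t Ht0 (cos_phase_pos t Ht)).
Qed.

End Solution.

End Trajectory.

Lemma monomial_bound (s c r : R) (m j : nat) :
  Rabs s <= r -> 0 <= c <= 1 -> - r ^ m <= s ^ m * c ^ j <= r ^ m.
Proof.
  intros Hs Hc. apply Rabs_le_between. rewrite Rabs_mult, <- !RPow_abs, (Rabs_pos_eq c) by lra.
  assert (Hsm : Rabs s ^ m <= r ^ m) by (apply pow_incr; split; [apply Rabs_pos|exact Hs]).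
  assert (Hcj : c ^ j <= 1) by (rewrite <- (pow1 j); apply pow_incr; lra).
  assert (0 <= Rabs s ^ m) by (apply pow_le, Rabs_pos).
  assert (0 <= c ^ j) by (apply pow_le; lra).
  nra.
Qed.

(* Lets lra bound a polynomial in monomial form by the weights of its coefficients. *)
Ltac bound_monomials s c Hs Hc :=
  repeat match goal with
  | |- context [s ^ ?m * c ^ ?j] =>
      lazymatch goal with
      | _ : _ <= s ^ m * c ^ j <= _ |- _ => fail
      | _ => pose proof (monomial_bound s c _ m j Hs Hc)
      end
  end.

Section TaylorQ.

Variable c : R.
Hypothesis Hc : 0 <= c <= 1.

Lemma sigmaQ_sq : sigmaQ c ^ 2 = 1 - c ^ 2.
Proof. apply pow2_sqrt. nra. Qed.

Lemma sigmaQ_bound : 0 <= sigmaQ c <= 1.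
Proof. pose proof sigmaQ_sq. split; [apply sqrt_pos|]. pose proof (sqrt_pos (1 - c ^ 2)). unfold sigmaQ in *. nra. Qed.

Lemma is_derive_csin s : is_derive (fun s => csin s c) s (c * cos (s * sigmaQ c)).
Proof.
  unfold csin. destruct (Req_dec_T (sigmaQ c) 0) as [H0|H0].
  - assert (c = 1) by (pose proof sigmaQ_sq; rewrite H0 in *; nra).
    rewrite H0, Rmult_0_r, cos_0. subst c. rewrite Rmult_1_l. exact (is_derive_id s).
  - auto_derive; [easy|]. field. exact H0.
Qed.

Lemma sigmaQ_sq_csin s : sigmaQ c ^ 2 * csin s c = c * sigmaQ c * sin (s * sigmaQ c).
Proof.
  unfold csin. destruct (Req_dec_T (sigmaQ c) 0) as [H0|H0]; [rewrite H0; ring|field; exact H0].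
Qed.

(* [Qarg] is the argument of the logarithm in [Q]: the solution of
   f'' = -(1 - c^2) f, f(0) = 1, f'(0) = c, so that ln f solves a Riccati equation. *)
Definition Qarg (s : R) : R := csin s c + cos (s * sigmaQ c).
Definition dQarg (s : R) : R := c * cos (s * sigmaQ c) - sigmaQ c * sin (s * sigmaQ c).

Lemma Qarg_0 : Qarg 0 = 1.
Proof.
  unfold Qarg, csin. rewrite Rmult_0_l, cos_0.
  destruct (Req_dec_T (sigmaQ c) 0); [|rewrite sin_0]; ring.
Qed.

Lemma dQarg_0 : dQarg 0 = c.
Proof. unfold dQarg. rewrite Rmult_0_l, cos_0, sin_0. ring. Qed.

Lemma is_derive_Qarg s : is_derive Qarg s (dQarg s).
Proof.
  unfold dQarg. apply (is_derive_plus (fun s => csin s c)); [apply is_derive_csin|].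
  auto_derive; [easy|]. ring.
Qed.

Lemma is_derive_dQarg s : is_derive dQarg s ((c ^ 2 - 1) * Qarg s).
Proof.
  unfold dQarg, Qarg. auto_derive; [easy|].
  replace (c ^ 2 - 1) with (- sigmaQ c ^ 2) by (rewrite sigmaQ_sq; ring).
  rewrite Rmult_plus_distr_l, <- Ropp_mult_distr_l, sigmaQ_sq_csin. ring.
Qed.

Lemma Rabs_dQarg_le s : Rabs (dQarg s) <= 2.
Proof.
  pose proof sigmaQ_bound. pose proof (SIN_bound (s * sigmaQ c)). pose proof (COS_bound (s * sigmaQ c)).
  unfold dQarg. apply Rabs_le. split; nra.
Qed.

Lemma Qarg_lower s : Rabs s <= / 1000 -> 9 / 10 <= Qarg s.
Proof.
  intros Hs.
  assert (Hd : forall x, Rabs x <= / 1000 -> is_derive (fun x => Qarg x - 1) x (dQarg x)).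
  { intros x _. replace (dQarg x) with (dQarg x - 0) by ring.
    apply (is_derive_minus Qarg (fun _ => 1)); [apply is_derive_Qarg|auto_derive; auto]. }
  assert (H := Rabs_le_of_is_derive_bound (fun s => Qarg s - 1) dQarg (/ 1000) 0 2 0 Hd
                 ltac:(simpl; rewrite Qarg_0; ring)
                 (fun s _ => ltac:(pose proof (Rabs_dQarg_le s); lra)) s Hs).
  simpl in H. apply Rabs_le_between in H. lra.
Qed.

(* The Taylor polynomial of [ln Qarg] encoded by [Qpoly], its derivative, and the
   defect by which that derivative fails the Riccati equation u' = c^2 - 1 - u^2
   solved by u = dQarg / Qarg; the last two are expanded into monomials s^m c^j
   for [bound_monomials]. *)
Definition logQarg_approx (s : R) : R := c * s + s ^ 2 * Qpoly s c.

Definition dlogQarg_approx (s : R) : R :=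
  1 * (s ^ 0 * c ^ 1) - 1 * (s ^ 1 * c ^ 0) + 1 * (s ^ 2 * c ^ 1)
  - 1/3 * (s ^ 3 * c ^ 0) - 2/3 * (s ^ 3 * c ^ 2)
  + 2/3 * (s ^ 4 * c ^ 1) + 1/3 * (s ^ 4 * c ^ 3)
  - 2/15 * (s ^ 5 * c ^ 0) - 11/15 * (s ^ 5 * c ^ 2) - 2/15 * (s ^ 5 * c ^ 4)
  + 17/45 * (s ^ 6 * c ^ 1) + 26/45 * (s ^ 6 * c ^ 3) + 2/45 * (s ^ 6 * c ^ 5).

Definition riccati_defect (s : R) : R :=
  - 17/45 * (s ^ 0 * c ^ 0) - 4 * (s ^ 0 * c ^ 2) - 38/15 * (s ^ 0 * c ^ 4)
  - 4/45 * (s ^ 0 * c ^ 6)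
  + 22/15 * (s ^ 1 * c ^ 1) + 56/15 * (s ^ 1 * c ^ 3) + 4/5 * (s ^ 1 * c ^ 5)
  - 4/45 * (s ^ 2 * c ^ 0) - 28/15 * (s ^ 2 * c ^ 2) - 8/3 * (s ^ 2 * c ^ 4)
  - 17/45 * (s ^ 2 * c ^ 6)
  + 58/135 * (s ^ 3 * c ^ 1) + 88/45 * (s ^ 3 * c ^ 3) + 22/15 * (s ^ 3 * c ^ 5)
  + 4/27 * (s ^ 3 * c ^ 7)
  - 4/225 * (s ^ 4 * c ^ 0) - 472/675 * (s ^ 4 * c ^ 2) - 359/225 * (s ^ 4 * c ^ 4)
  - 16/25 * (s ^ 4 * c ^ 6) - 32/675 * (s ^ 4 * c ^ 8)
  + 68/675 * (s ^ 5 * c ^ 1) + 478/675 * (s ^ 5 * c ^ 3) + 24/25 * (s ^ 5 * c ^ 5)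
  + 148/675 * (s ^ 5 * c ^ 7) + 8/675 * (s ^ 5 * c ^ 9)
  - 289/2025 * (s ^ 6 * c ^ 2) - 884/2025 * (s ^ 6 * c ^ 4) - 248/675 * (s ^ 6 * c ^ 6)
  - 104/2025 * (s ^ 6 * c ^ 8) - 4/2025 * (s ^ 6 * c ^ 10).

Lemma is_derive_logQarg_approx s : is_derive logQarg_approx s (dlogQarg_approx s).
Proof. unfold logQarg_approx, Qpoly, dlogQarg_approx. auto_derive; [easy|]. field. Qed.

Lemma is_derive_dlogQarg_approx s :
  is_derive dlogQarg_approx s (c ^ 2 - 1 - dlogQarg_approx s ^ 2 - s ^ 6 * riccati_defect s).
Proof. unfold dlogQarg_approx, riccati_defect. auto_derive; [easy|]. field. Qed.

Lemma Rabs_dlogQarg_approx_le s : Rabs s <= / 1000 -> Rabs (dlogQarg_approx s) <= 11 / 10.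
Proof.
  intros Hs. unfold dlogQarg_approx. bound_monomials s c Hs Hc. apply Rabs_le. lra.
Qed.

Lemma Rabs_riccati_defect_le s : Rabs s <= / 1000 -> Rabs (riccati_defect s) <= 8.
Proof.
  intros Hs. unfold riccati_defect. bound_monomials s c Hs Hc. apply Rabs_le. lra.
Qed.

Lemma Rabs_dlogQarg_error_le (T : R) : 0 <= T <= / 1000 ->
  forall s, Rabs s <= T ->
  Rabs (dQarg s / Qarg s - dlogQarg_approx s) <= 8 / 7 * Rabs s ^ 7 + 64 * T ^ 8.
Proof.
  intros HT.
  set (u := fun s => dQarg s / Qarg s).
  set (e := fun s => u s - dlogQarg_approx s).
  assert (HQ : forall s, Rabs s <= T -> 9 / 10 <= Qarg s) by (intros; apply Qarg_lower; lra).
  assert (He : forall s, Rabs s <= T ->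
            is_derive e s (s ^ 6 * riccati_defect s - (u s + dlogQarg_approx s) * e s)).
  { intros s Hs. specialize (HQ s Hs).
    assert (H := is_derive_minus _ _ _ _ _
                   (is_derive_div _ _ s _ _ (is_derive_dQarg s) (is_derive_Qarg s) ltac:(lra))
                   (is_derive_dlogQarg_approx s)).
    unfold minus, plus, opp, mult in H; simpl in H.
    refine (eq_ind _ (is_derive e s) H _ (_ : _ = _ :> R)).
    unfold e, u. field. lra. }
  assert (He0 : e 0 = 0) by (unfold e, u; rewrite Qarg_0, dQarg_0; unfold dlogQarg_approx; simpl; field).
  assert (Hbound : forall s, Rabs s <= T ->
            Rabs (s ^ 6 * riccati_defect s - (u s + dlogQarg_approx s) * e s)
            <= 8 * Rabs s ^ 6 + 4 * Rabs (e s)).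
  { intros s Hs. specialize (HQ s Hs).
    assert (Hu : Rabs (u s) <= 20 / 9).
    { unfold u. rewrite Rabs_div by lra. rewrite (Rabs_pos_eq (Qarg s)) by lra.
      apply Rle_div_l; [lra|]. pose proof (Rabs_dQarg_le s). nra. }
    pose proof (Rabs_dlogQarg_approx_le s ltac:(lra)).
    pose proof (Rabs_riccati_defect_le s ltac:(lra)).
    pose proof (Rabs_triang (u s) (dlogQarg_approx s)).
    eapply Rle_trans; [apply Rabs_triang|]. rewrite Rabs_Ropp, !Rabs_mult, <- RPow_abs.
    pose proof (pow_le (Rabs s) 6 (Rabs_pos s)). pose proof (Rabs_pos (e s)). nra. }
  intros s Hs.
  assert (H := gronwall_pow_bound e _ T 8 4 6 ltac:(lra) ltac:(lra) ltac:(lra) ltac:(lra)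
                 He He0 Hbound s Hs).
  replace (INR 7) with 7 in H by (simpl; ring).
  assert (T ^ 7 * Rabs s <= T ^ 8).
  { replace (T ^ 8) with (T ^ 7 * T) by ring. apply Rmult_le_compat_l; [apply pow_le|]; lra. }
  fold (u s). fold (e s). lra.
Qed.

Lemma Rabs_logQarg_error_le (tau : R) : Rabs tau <= / 1000 ->
  Rabs (ln (Qarg tau) - logQarg_approx tau) <= Rabs tau ^ 8.
Proof.
  intros Htau. set (T := Rabs tau) in *.
  assert (HD : forall s, Rabs s <= T -> is_derive (fun s => ln (Qarg s) - logQarg_approx s) s
                                          (dQarg s / Qarg s - dlogQarg_approx s)).
  { intros s Hs. pose proof (Qarg_lower s ltac:(lra)).
    apply (is_derive_minus (fun s => ln (Qarg s))); [|apply is_derive_logQarg_approx].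
    auto_derive; [split; [exists (dQarg s); apply is_derive_Qarg|lra]|].
    replace (Derive (fun x => Qarg x) s) with (dQarg s)
      by (symmetry; apply is_derive_unique, is_derive_Qarg).
    field. lra. }
  assert (HD0 : ln (Qarg 0) - logQarg_approx 0 = 0)
    by (rewrite Qarg_0, ln_1; unfold logQarg_approx; ring).
  assert (H := Rabs_le_of_is_derive_bound _ _ T (8 / 7) (64 * T ^ 8) 7 HD HD0
                 (Rabs_dlogQarg_error_le T ltac:(split; [apply Rabs_pos|lra])) tau (Rle_refl T)).
  fold T in H. replace (INR 8) with 8 in H by (simpl; ring).
  assert (0 <= T ^ 8) by (apply pow_le, Rabs_pos). nra.
Qed.

Lemma Rabs_Qpoly_sub_Q_le (tau : R) : 0 < Rabs tau <= / 1000 ->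
  Rabs (Qpoly tau c - Q tau c) <= / 10 ^ 18.
Proof.
  intros [Htau0 Htau].
  assert (Hdiff : Qpoly tau c - Q tau c = - (ln (Qarg tau) - logQarg_approx tau) / tau ^ 2).
  { assert (tau <> 0) by (intro H0; rewrite H0, Rabs_R0 in Htau0; lra).
    unfold Q, Qarg, logQarg_approx. field. assumption. }
  rewrite Hdiff. unfold Rdiv. rewrite Rabs_mult, Rabs_Ropp, Rabs_inv, <- RPow_abs.
  assert (Htau6 : Rabs tau ^ 6 <= / 10 ^ 18).
  { replace (/ 10 ^ 18) with ((/ 1000) ^ 6) by field. apply pow_incr. lra. }
  pose proof (Rabs_logQarg_error_le tau Htau).
  replace (/ 10 ^ 18) with (/ 10 ^ 18 * Rabs tau ^ 2 * / Rabs tau ^ 2) by (field; lra).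
  apply Rmult_le_compat_r; [apply Rlt_le, Rinv_0_lt_compat, pow_lt; lra|].
  replace (Rabs tau ^ 8) with (Rabs tau ^ 6 * Rabs tau ^ 2) in H by ring.
  assert (0 < Rabs tau ^ 2) by (apply pow_lt; lra). nra.
Qed.

End TaylorQ.

Theorem mainTheorem10 :
  (forall (c0 c1 a v0 : R), 0 <= c0 -> 0 < c1 -> a < 0 -> 0 <= v0 ->
     c0 ^ 2 + 4 * a * c1 < 0 ->
     forall (alpha beta : R) (v : R -> R), alpha < 0 < beta ->
       (forall x, alpha < x < beta ->
          derivable_pt_lim v x (a - c0 * v x - c1 * (v x) ^ 2)) ->
       v 0 = v0 ->
       forall t, alpha < t < beta -> t <> 0 ->
         forall pr : Riemann_integrable v 0 t,
           RiemannInt pr =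
             (A0 c0 c1 v0 + Rabs a) * t ^ 2
               * Q (t * ell1 a c0 c1 v0) (cos_theta1 a c0 c1 v0)
             + v0 * t)
  /\
  (forall c tau, 0 <= c <= 1 -> 0 < Rabs tau <= / 1000 ->
     Rabs (Qpoly tau c - Q tau c) <= / (10 ^ 18)).
Proof.
  split.
  - intros c0 c1 a v0 Hc0 Hc1 Ha Hv0 Hdisc alpha beta v H0 Hv Hv00.
    exact (RiemannInt_trajectory c0 c1 a v0 Hc0 Hc1 Ha Hv0 Hdisc alpha beta v H0 Hv Hv00).
  - intros c tau Hc. exact (Rabs_Qpoly_sub_Q_le c Hc tau).
Qed.
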